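(* Let $G$ be a compact metrizable monothetic group with Haar measure $\mu$. If $A\subset G$ has $\mu(A)>0$, then $\mu(nA)>0$ for every $n\in\mathbb{Z}\setminus\{0\}$, where $nA=\{na:a\in A\}$.
   Context: A topological group is monothetic if it has a dense cyclic subgroup (hence it is abelian). *)

From HB Require Import structures.
From mathcomp Require Import all_boot all_order all_algebra.
From mathcomp Require Import all_classical all_reals all_analysis.
Set Implicit Arguments. Unset Strict Implicit. Unset Printing Implicit Defensive.
Import Order.TTheory GRing.Theory Num.Theory.
Local Open Scope classical_set_scope.
Local Open Scope ring_scope.

Definition borel_set (T : topologicalType) (A : set T) : Prop :=
  <<s [set: T], [set U | open U] >> A.

Definition metrizable (R : realType) (T : topologicalType) : Prop :=
  exists d : T -> T -> R,
    [/\ (forall x y, 0 <= d x y),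
        (forall x y, d x y = 0 <-> x = y),
        (forall x y, d x y = d y x),
        (forall x y z, d x z <= d x y + d y z) &
        (forall x (U : set T), nbhs x U <->
           exists e : R, 0 < e /\ [set y | d x y < e] `<=` U)].

Definition monothetic (G : topologicalZmodType) : Prop :=
  exists g : G, closure (range (fun k : int => g *~ k)) = [set: G].

Definition haar_measure (R : realType) (G : topologicalZmodType)
    (mu : set G -> \bar R) : Prop :=
  [/\ mu set0 = 0%E /\ (forall A, borel_set A -> (0 <= mu A)%E),
      (forall F : nat -> set G, (forall n, borel_set (F n)) ->
          trivIset [set: nat] F ->
          (fun n => \sum_(i < n) mu (F i))%E @ \oo --> mu (\bigcup_n F n)),
      mu [set: G] = 1%E,
      (forall (x : G) A, borel_set A -> mu [set x + a | a in A] = mu A) &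
      (forall A, borel_set A ->
          mu A = ereal_sup [set mu K | K in [set K | compact K /\ K `<=` A]])].

From HB Require Import structures.
From mathcomp Require Import all_boot all_order all_algebra.
From mathcomp Require Import all_classical all_reals all_analysis.
From mathcomp Require Import lra.
Set Implicit Arguments. Unset Strict Implicit. Unset Printing Implicit Defensive.
Import Order.TTheory GRing.Theory Num.Theory.
Local Open Scope classical_set_scope.
Local Open Scope ring_scope.

(* By inner regularity we may assume that A is a compact set K. Let g
   generate a dense cyclic subgroup; since nG is closed, the |n|
   translates g i + nG (0 <= i < |n|) cover G, so mu(nG) > 0. Now apply
   Fubini to the closed set S = {(x, y) | x + n y \in nK} of G x G, which is
   product-measurable because G is separable and metrizable: each y-section
   of S is a translate of nK, while over every x = n z the x-section contains
   the translate -z + K. Hence, if mu(nK) were 0,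
   0 = \int mu(S^y) dy = \int mu(S_x) dx >= mu(K) mu(nG) > 0. *)

Section TopologicalZmoduleFacts.
Variable G : topologicalZmodType.

Lemma mulrn_continuous (k : nat) : continuous (fun x : G => x *+ k).
Proof.
elim: k => [|k IHk].
  by under eq_fun do rewrite mulr0n; exact: cst_continuous.
under eq_fun do rewrite mulrS.
move=> x; apply: (@continuous_comp _ _ _ (fun x => (x, x *+ k)) (fun z : G * G => z.1 + z.2)).
  by apply: cvg_pair; [exact: cvg_id | exact: IHk].
exact: add_continuous.
Qed.

Lemma mulrz_continuous (n : int) : continuous (fun x : G => x *~ n).
Proof.
case: n => k; first exact: mulrn_continuous.
under eq_fun do rewrite NegzE mulrNz.
move=> x; apply: (@continuous_comp _ _ _ (fun x => x *+ k.+1) -%R).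
  exact: mulrn_continuous.
exact: opp_continuous.
Qed.

Lemma addr_continuous (a : G) : continuous (fun x : G => a + x).
Proof.
move=> x; apply: (@continuous_comp _ _ _ (fun x => (a, x)) (fun z : G * G => z.1 + z.2)).
  by apply: cvg_pair; [exact: cvg_cst | exact: cvg_id].
exact: add_continuous.
Qed.

Lemma addr_mulrz_continuous (n : int) :
  continuous (fun p : G * G => p.1 + p.2 *~ n).
Proof.
move=> p; apply: (@continuous_comp _ _ _ (fun p : G * G => (p.1, p.2 *~ n))
  (fun z : G * G => z.1 + z.2)); last exact: add_continuous.
apply: cvg_pair; first exact: cvg_fst.
apply: (@continuous_comp _ _ _ snd (fun y : G => y *~ n)); first exact: cvg_snd.
exact: mulrz_continuous.
Qed.

Lemma translate_preimage (a : G) (A : set G) :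
  [set a + x | x in A] = (fun y => - a + y) @^-1` A.
Proof.
apply/seteqP; split => [_ [x Ax <-]|y Ay]; first by rewrite /= addKr.
by exists (- a + y); rewrite ?addrNK // addNKr.
Qed.

Lemma closed_translate (a : G) (A : set G) :
  closed A -> closed [set a + x | x in A].
Proof.
by rewrite translate_preimage => cA; apply: preimage_closed => // y _; exact: addr_continuous.
Qed.

End TopologicalZmoduleFacts.

Lemma continuous_image_compact (T U : topologicalType) (f : T -> U) (A : set T) :
  continuous f -> compact A -> compact (f @` A).
Proof. by move=> f_cont; apply: continuous_compact; exact: continuous_subspaceT. Qed.

Section BorelSets.
Variable T : topologicalType.

Lemma open_borel (A : set T) : open A -> borel_set A.
Proof. exact: sub_sigma_algebra. Qed.

Lemma closed_borel (A : set T) : closed A -> borel_set A.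
Proof.
move=> /closed_openC/open_borel/sigma_algebraCD.
by rewrite setTD setCK.
Qed.

Lemma compact_borel (A : set T) : hausdorff_space T -> compact A -> borel_set A.
Proof. by move=> T_hausdorff /(compact_closed T_hausdorff); exact: closed_borel. Qed.

Lemma borel_set_preimage (U : topologicalType) (f : T -> U) (A : set U) :
  continuous f -> borel_set A -> borel_set (f @^-1` A).
Proof.
move=> f_cont; rewrite -[f @^-1` A]setTI; move: A.
apply: smallest_sub; first exact/sigma_algebra_image/smallest_sigma_algebra.
move=> V oV; rewrite /image_set_system /= setTI.
by apply: open_borel; apply: open_comp => // x _; exact: f_cont.
Qed.

End BorelSets.

Lemma borel_translate (G : topologicalZmodType) (a : G) (A : set G) :
  borel_set A -> borel_set [set a + x | x in A].
Proof. by rewrite translate_preimage; apply: borel_set_preimage; exact: addr_continuous. Qed.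

Section MetricTopology.
Variables (R : realType) (T : topologicalType) (d : T -> T -> R).
Hypotheses (d_ge0 : forall x y, 0 <= d x y) (d_eq0 : forall x y, d x y = 0 <-> x = y)
  (d_sym : forall x y, d x y = d y x) (d_triangle : forall x y z, d x z <= d x y + d y z)
  (d_nbhs : forall x (U : set T), nbhs x U <->
     exists e : R, 0 < e /\ [set y | d x y < e] `<=` U).

Lemma nbhs_dball x e : 0 < e -> nbhs x [set y | d x y < e].
Proof. by move=> e_gt0; apply/d_nbhs; exists e; split. Qed.

Lemma dball_triangle x y e e' :
  d x y <= e -> [set z | d y z < e'] `<=` [set z | d x z < e + e'].
Proof. by move=> dxy z /= dyz; apply: le_lt_trans (d_triangle x y z) _; exact: ler_ltD. Qed.

Lemma open_dball x e : open [set y | d x y < e].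
Proof.
rewrite openE => y /= dxy; apply/d_nbhs; exists (e - d x y); rewrite subr_gt0.
by split=> //; apply: subset_trans (dball_triangle (lexx (d x y))) _ => z; rewrite /= subrKC.
Qed.

Lemma dist_hausdorff : hausdorff_space T.
Proof.
move=> x y xy_close; apply/d_eq0/eqP; rewrite eq_le d_ge0 andbT leNgt.
apply/negP => dxy_gt0.
have e_gt0 : 0 < d x y / 2 by rewrite divr_gt0.
have [z [/= dxz dyz]] := xy_close _ _ (nbhs_dball x e_gt0) (nbhs_dball y e_gt0).
rewrite d_sym in dyz.
by have := dball_triangle (ltW dxz) dyz; rewrite -splitr /= ltxx.
Qed.

End MetricTopology.

Definition borel (T : ptopologicalType) := g_sigma_algebraType (@open T).

Section SeparableMetricProduct.
Variables (R : realType) (T : ptopologicalType) (d : T -> T -> R).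
Hypotheses (d_sym : forall x y, d x y = d y x)
  (d_triangle : forall x y z, d x z <= d x y + d y z)
  (d_nbhs : forall x (U : set T), nbhs x U <->
     exists e : R, 0 < e /\ [set y | d x y < e] `<=` U).
Variables (I : countType) (e : I -> T).
Hypothesis e_dense : closure (range e) = [set: T].

Lemma dense_dball x r : 0 < r -> exists i, d x (e i) < r.
Proof.
move=> r_gt0; have : closure (range e) x by rewrite e_dense.
by move=> /(_ _ (nbhs_dball d_nbhs x r_gt0)) [_ [[i _ <-]]]; exists i.
Qed.

Let rect (t : I * I * nat) : set (T * T) :=
  [set y | d (e t.1.1) y < t.2.+1%:R^-1] `*` [set y | d (e t.1.2) y < t.2.+1%:R^-1].

Lemma open_prod_measurable (O : set (T * T)) :
  open O -> measurable (O : set (borel T * borel T)).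
Proof.
move=> oO.
have -> : O = \bigcup_t (if `[< rect t `<=` O >] then rect t else set0).
  apply/seteqP; split => [p Op|p [t _]]; last by case: asboolP => // tO /tO.
  have [[U1 U2] /= [/d_nbhs [e1 [e1_gt0 sU1]] /d_nbhs [e2 [e2_gt0 sU2]]] sO] :=
    open_nbhs_nbhs (conj oO Op).
  have emin_gt0 : 0 < Num.min e1 e2 / 2 by rewrite divr_gt0 // lt_min e1_gt0.
  have [m _ /(_ m (leqnn _)) rm_lt] := near_infty_natSinv_lt (PosNum emin_gt0).
  have [rm_e1 rm_e2] : m.+1%:R^-1 + m.+1%:R^-1 < e1 /\ m.+1%:R^-1 + m.+1%:R^-1 < e2.
    move: rm_lt; rewrite /= ltr_pdivlMr // lt_min => /andP[h1 h2].
    by set r := m.+1%:R^-1 in h1 h2 *; split; lra.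
  have [r_gt0] : 0 < m.+1%:R^-1 :> R by rewrite invr_gt0.
  have [i dpi] := dense_dball p.1 r_gt0; have [j dpj] := dense_dball p.2 r_gt0.
  exists (i, j, m) => //; rewrite asboolT; first by split; rewrite /= d_sym.
  move=> [y1 y2] [/= dy1 dy2]; apply: sO; split => /=.
  - by apply: sU1; apply: lt_trans rm_e1; exact: (dball_triangle d_triangle (ltW dpi) dy1).
  - by apply: sU2; apply: lt_trans rm_e2; exact: (dball_triangle d_triangle (ltW dpj) dy2).
apply: countable_bigcupT_measurable => // t; case: asboolP => _; last exact: measurable0.
by apply: measurableX; apply: sub_sigma_algebra; exact: open_dball.
Qed.

Lemma closed_prod_measurable (S : set (T * T)) :
  closed S -> measurable (S : set (borel T * borel T)).
Proof.
by move=> /closed_openC/open_prod_measurable/measurableC; rewrite setCK.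
Qed.

End SeparableMetricProduct.

Lemma cyclic_translates_cover (G : topologicalZmodType) (g : G) (n : int) :
  closure (range (fun k : int => g *~ k)) = [set: G] -> n != 0 ->
  closed (range (fun x : G => x *~ n)) ->
  [set: G] `<=`
    \big[setU/set0]_(i < `|n|%N) [set g *+ i + x | x in range (fun x : G => x *~ n)].
Proof.
move=> g_dense n_neq0 nG_closed; set U := \big[setU/set0]_(i < _) _.
have U_closed : closed U by apply: closed_bigsetU => i _; exact: closed_translate.
rewrite -g_dense [X in _ `<=` X](closure_id U).1 //; apply: closureS => _ [k _ <-].
have r_ge0 : 0 <= (k %% n)%Z by rewrite modz_ge0.
have r_lt : (`|(k %% n)%Z| < `|n|)%N by rewrite -ltz_nat gez0_abs // ltz_mod.
rewrite /U -(bigcup_mkord _ (fun i => [set g *+ i + x | x in range (fun x : G => x *~ n)])).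
exists (Ordinal r_lt) => //=.
exists ((g *~ (k %/ n)%Z) *~ n); first by exists (g *~ (k %/ n)%Z).
by rewrite pmulrn gez0_abs // -mulrzA -mulrzDr addrC -divz_eq.
Qed.

Lemma ysection_addr_mulrz (V : zmodType) (C : set V) (n : int) (y : V) :
  ysection [set p : V * V | C (p.1 + p.2 *~ n)] y = [set - (y *~ n) + c | c in C].
Proof.
apply/seteqP; split => x /=; rewrite /ysection /= inE.
  by move=> Cx; exists (x + y *~ n); rewrite // addrC addrK.
by case=> c Cc <-; rewrite /= addrAC addNr add0r.
Qed.

Lemma translate_sub_xsection_addr_mulrz (V : zmodType) (K : set V) (n : int) (z : V) :
  [set - z + k | k in K] `<=`
  xsection [set p : V * V | [set a *~ n | a in K] (p.1 + p.2 *~ n)] (z *~ n).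
Proof.
move=> _ [k Kk <-]; rewrite /xsection /= inE /=.
by exists k; rewrite // -mulrzDl addNKr.
Qed.

(* [g_sigma_algebraType] needs a pointed type; a topological group is pointed by [0]. *)
Definition pointed_zmod (G : topologicalZmodType) : Type := G.
HB.instance Definition _ (G : topologicalZmodType) := Topological.on (pointed_zmod G).
HB.instance Definition _ (G : topologicalZmodType) :=
  isPointed.Build (pointed_zmod G) (0 : G).

Section HaarMeasure.
Variables (R : realType) (G : topologicalZmodType) (mu : set G -> \bar R).
Hypothesis mu_haar : haar_measure mu.

Local Notation B := (borel (pointed_zmod G)).

Lemma haar_ge0 (A : set G) : borel_set A -> (0 <= mu A)%E.
Proof. by case: mu_haar => -[_ +] _ _ _ _; apply. Qed.

Lemma haar_translate (a : G) (A : set G) :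
  borel_set A -> mu [set a + x | x in A] = mu A.
Proof. by case: mu_haar => _ _ _ + _; apply. Qed.

Lemma haar_inner_compact (A : set G) : borel_set A -> (0 < mu A)%E ->
  exists2 K, compact K /\ K `<=` A & (0 < mu K)%E.
Proof.
case: mu_haar => _ _ _ _ inner A_borel; rewrite inner //.
by move=> /ereal_sup_gtP [_ [K KA <-] K_gt0]; exists K.
Qed.

Definition borel_haar (A : set B) : \bar R :=
  if `[< borel_set (A : set G) >] then mu A else 0%E.

Lemma borel_haarE (A : set G) : borel_set A -> borel_haar A = mu A.
Proof. by move=> A_borel; rewrite /borel_haar asboolT. Qed.

Lemma borel_haar0 : borel_haar set0 = 0%E.
Proof. by rewrite borel_haarE; [case: mu_haar => -[] | exact: (@measurable0 _ B)]. Qed.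

Lemma borel_haar_ge0 (A : set B) : (0 <= borel_haar A)%E.
Proof. by rewrite /borel_haar; case: asboolP => // /haar_ge0. Qed.

Lemma borel_haar_sigma_additive : semi_sigma_additive borel_haar.
Proof.
move=> F F_borel F_disj UF_borel; case: mu_haar => _ mu_additive _ _ _.
rewrite borel_haarE //.
suff -> : (fun k => \sum_(0 <= i < k) borel_haar (F i))%E =
          (fun k => \sum_(i < k) mu (F i))%E by exact: mu_additive.
by apply/funext => k; rewrite big_mkord; apply: eq_bigr => i _; exact: borel_haarE (F_borel i).
Qed.

HB.instance Definition _ := isMeasure.Build _ _ _ borel_haar
  borel_haar0 borel_haar_ge0 borel_haar_sigma_additive.

Lemma borel_haarT : borel_haar setT = 1%E.
Proof. by rewrite borel_haarE; [case: mu_haar | exact: (@measurableT _ B)]. Qed.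

HB.instance Definition _ := Measure_isProbability.Build _ _ _ borel_haar borel_haarT.

Lemma haar_gt0_of_translates_cover (A : set G) (k : nat) (x_ : nat -> G) :
  borel_set A -> [set: G] `<=` \big[setU/set0]_(i < k) [set x_ i + a | a in A] ->
  (0 < mu A)%E.
Proof.
move=> A_borel cover; rewrite lt_def haar_ge0 // andbT; apply/eqP => A0.
have : (1 <= \sum_(i < k) borel_haar [set (x_ i + a)%R | a in A])%E.
  rewrite -borel_haarT.
  apply: (@content_subadditive _ _ _ borel_haar setT
    (fun i => [set (x_ i + a)%R | a in A]) k) cover => [i _|].
  - exact: borel_translate.
  - exact: (@measurableT _ B).
rewrite big1 ?lee_fin ?ler10 // => i _.
by rewrite borel_haarE ?haar_translate //; exact: borel_translate.
Qed.

Hypotheses (G_compact : compact [set: G]) (G_hausdorff : hausdorff_space G)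
  (closed_prod : forall S : set (G * G), closed S -> measurable (S : set (B * B))).

Lemma haar_mulrz_compact_gt0 (n : int) (K : set G) :
  (0 < mu (range (fun x : G => x *~ n)))%E -> compact K -> (0 < mu K)%E ->
  (0 < mu [set a *~ n | a in K])%E.
Proof.
move=> nG_gt0 K_compact K_gt0; set C := [set a *~ n | a in K].
have C_compact : compact C := continuous_image_compact (@mulrz_continuous _ n) K_compact.
have C_borel := compact_borel G_hausdorff C_compact.
have K_borel := compact_borel G_hausdorff K_compact.
set S := [set p : G * G | C (p.1 + p.2 *~ n)].
have S_measurable : measurable (S : set (B * B)).
  apply: closed_prod; apply: (preimage_closed _ (compact_closed G_hausdorff C_compact)).
  by move=> p _; exact: addr_mulrz_continuous.
rewrite lt_def haar_ge0 // andbT; apply/eqP => C0.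
have ysections0 : (\int[borel_haar]_y (borel_haar \o ysection S) y = 0)%E.
  apply: integral0_eq => y _ /=; rewrite /S ysection_addr_mulrz borel_haarE.
    by rewrite haar_translate.
  exact: borel_translate.
have nG_borel : borel_set (range (fun x : G => x *~ n)).
  exact: compact_borel G_hausdorff (continuous_image_compact (@mulrz_continuous _ n) G_compact).
have xsections_gt0 : (0 < \int[borel_haar]_x (borel_haar \o xsection S) x)%E.
  apply: (lt_le_trans (mule_gt0 K_gt0 nG_gt0)).
  rewrite -(borel_haarE nG_borel) -integral_cst //.
  apply: (@le_trans _ _ (\int[borel_haar]_(x in range (fun x : G => x *~ n))
                            (borel_haar \o xsection S) x)%E); last first.
    by apply: ge0_subset_integral => //; exact: measurable_fun_xsection.
  apply: ge0_le_integral => //.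
  - by move=> x _; exact: haar_ge0.
  - exact: measurable_funS measurableT (subsetT _) (measurable_fun_xsection _ S_measurable).
  move=> _ [z _ <-] /=.
  rewrite -(haar_translate (- z)) // -borel_haarE; last exact: borel_translate.
  apply: le_measure; rewrite ?inE; first exact: borel_translate.
    exact: measurable_xsection _ S_measurable.
  exact: translate_sub_xsection_addr_mulrz.
have := indic_fubini_tonelli borel_haar borel_haar S_measurable.
rewrite indic_fubini_tonelli_FE // indic_fubini_tonelli_GE // ysections0 => xsections0.
by rewrite xsections0 ltxx in xsections_gt0.
Qed.

End HaarMeasure.

Theorem lemma7p4 (R : realType) (G : topologicalZmodType)
    (mu : set G -> \bar R) :
  compact [set: G] -> metrizable R G -> monothetic G -> haar_measure mu ->
  forall A : set G, borel_set A -> (0 < mu A)%E ->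
  forall n : int, n != 0 ->
    exists B : set G, [/\ borel_set B, B `<=` [set a *~ n | a in A] &
                         (0 < mu B)%E].
Proof.
move=> G_compact [d [d_ge0 d_eq0 d_sym d_triangle d_nbhs]] [g g_dense] mu_haar.
move=> A A_borel A_gt0 n n_neq0.
have G_hausdorff := dist_hausdorff d_ge0 d_eq0 d_sym d_triangle d_nbhs.
have closed_prod (S : set (G * G)) : closed S ->
    measurable (S : set (borel (pointed_zmod G) * borel (pointed_zmod G))).
  exact: (@closed_prod_measurable R (pointed_zmod G) d d_sym d_triangle d_nbhs _ _ g_dense).
have nG_compact := continuous_image_compact (@mulrz_continuous G n) G_compact.
have nG_gt0 : (0 < mu (range (fun x : G => x *~ n)))%E.
  apply: (@haar_gt0_of_translates_cover _ _ _ mu_haar _ `|n|%N (fun i => g *+ i)).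
    exact: compact_borel G_hausdorff nG_compact.
  exact: cyclic_translates_cover g_dense n_neq0 (compact_closed G_hausdorff nG_compact).
have [K [K_compact KA] K_gt0] := haar_inner_compact mu_haar A_borel A_gt0.
exists [set a *~ n | a in K]; split.
- exact: compact_borel G_hausdorff (continuous_image_compact (@mulrz_continuous G n) K_compact).
- exact: image_subset.
- by apply: (haar_mulrz_compact_gt0 mu_haar G_compact G_hausdorff).
Qed.
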